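(* Let $n\ge 2$ and let $\sigma,\delta,\tau\in\mathbb{C}$ with $\sigma\tau\neq 0$. Let $T=(n;\sigma,\delta,\tau)$ and let $\lambda_h=\delta+2\sqrt{\sigma\tau}\cos\frac{h\pi}{n+1}$, $h=1,\dots,n$, be its eigenvalues. Then \[ \min_{\lambda_j\neq\lambda_h}|\lambda_h-\lambda_j|= \begin{cases} 4\sqrt{|\sigma\tau|}\,\sin\frac{\pi}{2(n+1)}\sin\frac{(2h-1)\pi}{2(n+1)}, & \text{for } 1<h\le \frac n2 \text{ or } h=n,\\[1mm] 4\sqrt{|\sigma\tau|}\,\sin\frac{\pi}{2(n+1)}\sin\frac{(2h+1)\pi}{2(n+1)}, & \text{for } h=1 \text{ or } \frac n2<h<n. \end{cases} \] In particular, the distance of $\lambda_h$ to the other eigenvalues of $T$ depends only on $h$, $n$ and $|\sigma\tau|$. Moreover, the minimal distance between any two distinct eigenvalues of $T$ equals $4\sqrt{|\sigma\tau|}\sin\frac{\pi}{2(n+1)}\sin\frac{3\pi}{2(n+1)}$, and it is achieved by $|\lambda_1-\lambda_2|$ and by $|\lambda_{n-1}-\lambda_n|$.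
   Context: For $\sigma,\delta,\tau\in\mathbb{C}$, $T=(n;\sigma,\delta,\tau)$ denotes the $n\times n$ tridiagonal Toeplitz matrix with all diagonal entries equal to $\delta$, all superdiagonal entries equal to $\tau$ and all subdiagonal entries equal to $\sigma$. For $\sigma\tau\ne0$ its eigenvalues are $\lambda_h=\delta+2\sqrt{\sigma\tau}\cos\frac{h\pi}{n+1}$, $h=1,\dots,n$, for a fixed choice of the square root; they are simple. *)

From Stdlib Require Import Reals.
From Coquelicot Require Import Coquelicot.
Open Scope R_scope.

(* Eigenvalues of the tridiagonal Toeplitz matrix T = (n; sigma, delta, tau),
   sigma*tau <> 0:  lambda_h = delta + 2 s cos(h pi/(n+1)), h = 1..n,
   where s is a fixed square root of sigma*tau (s*s = sigma*tau). *)
Definition toep_eig (delta s : C) (n h : nat) : C :=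
  (delta + 2 * s * RtoC (cos (INR h * PI / INR (n + 1))))%C.

Definition is_min_dist (lam : nat -> C) (n h : nat) (d : R) : Prop :=
  (exists j : nat, (1 <= j <= n)%nat /\ lam j <> lam h /\ Cmod (lam h - lam j)%C = d) /\
  (forall j : nat, (1 <= j <= n)%nat -> lam j <> lam h -> d <= Cmod (lam h - lam j)%C).

From Stdlib Require Import Reals Lra Lia.
From Coquelicot Require Import Coquelicot.
Open Scope R_scope.

(* With theta = pi/(n+1), lambda_i - lambda_j = 2 s (cos(i theta) - cos(j theta)), so the
   distances between eigenvalues are 2|s| times the distances between the strictly
   decreasing reals cos(k theta), k = 1..n, and the eigenvalue nearest to lambda_h is an
   index neighbour.  The left gap minus the right gap at h is 2 cos(h theta)(cos theta - 1),
   so the nearest neighbour is on the left exactly when cos(h theta) >= 0, i.e. 2h <= n+1.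
   The gaps are cos(k theta) - cos((k+1) theta) = 2 sin(theta/2) sin((2k+1) theta/2) and,
   as (2k+1) theta/2 ranges over [3 theta/2, pi - 3 theta/2] for 1 <= k < n, the smallest
   ones are the two extreme gaps. *)

Lemma neq_of_Cmod_sub_pos (a b : C) : 0 < Cmod (a - b) -> b <> a.
Proof.
  intros Hpos ->. replace (a - a)%C with (RtoC 0) in Hpos by ring.
  rewrite Cmod_0 in Hpos. lra.
Qed.

Section NearestNeighbour.

Variables (lam : nat -> C) (x : nat -> R) (r : R) (n : nat).
Hypothesis r_pos : 0 < r.
Hypothesis lam_dist : forall i j, Cmod (lam i - lam j)%C = r * Rabs (x i - x j).
Hypothesis x_decr : forall i j, (1 <= i)%nat -> (i < j <= n)%nat -> x j < x i.

Lemma x_nonincr i j : (1 <= i)%nat -> (i <= j <= n)%nat -> x j <= x i.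
Proof.
  intros Hi Hij. destruct (Nat.eq_dec i j) as [->|Hne]; [lra|].
  left. apply x_decr; lia.
Qed.

Lemma dist_ge_gap_pred h j : (1 <= j < h)%nat -> (h <= n)%nat ->
  r * (x (h - 1) - x h) <= Cmod (lam h - lam j)%C.
Proof.
  intros Hj Hh.
  pose proof (x_nonincr j (h - 1) ltac:(lia) ltac:(lia)).
  pose proof (x_nonincr j h ltac:(lia) ltac:(lia)).
  rewrite lam_dist, Rabs_minus_sym, Rabs_pos_eq by lra.
  apply Rmult_le_compat_l; lra.
Qed.

Lemma dist_ge_gap_succ h j : (1 <= h < j)%nat -> (j <= n)%nat ->
  r * (x h - x (h + 1)) <= Cmod (lam h - lam j)%C.
Proof.
  intros Hh Hj.
  pose proof (x_nonincr (h + 1) j ltac:(lia) ltac:(lia)).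
  pose proof (x_nonincr h j ltac:(lia) ltac:(lia)).
  rewrite lam_dist, Rabs_pos_eq by lra.
  apply Rmult_le_compat_l; lra.
Qed.

Lemma is_min_dist_pred h : (2 <= h <= n)%nat ->
  ((h < n)%nat -> x (h - 1) - x h <= x h - x (h + 1)) ->
  is_min_dist lam n h (r * (x (h - 1) - x h)).
Proof.
  intros Hh Hcmp.
  assert (Hgap : x h < x (h - 1)) by (apply x_decr; lia).
  split.
  - assert (E : Cmod (lam h - lam (h - 1))%C = r * (x (h - 1) - x h))
      by (rewrite lam_dist, Rabs_minus_sym, Rabs_pos_eq; lra).
    exists (h - 1)%nat. repeat split; [lia | lia | | exact E].
    apply neq_of_Cmod_sub_pos. rewrite E. apply Rmult_lt_0_compat; lra.
  - intros j Hj Hne. destruct (Nat.lt_total j h) as [Hlt | [-> | Hgt]].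
    + apply dist_ge_gap_pred; lia.
    + congruence.
    + eapply Rle_trans; [| apply dist_ge_gap_succ; lia].
      apply Rmult_le_compat_l; [lra | apply Hcmp; lia].
Qed.

Lemma is_min_dist_succ h : (1 <= h < n)%nat ->
  ((1 < h)%nat -> x h - x (h + 1) <= x (h - 1) - x h) ->
  is_min_dist lam n h (r * (x h - x (h + 1))).
Proof.
  intros Hh Hcmp.
  assert (Hgap : x (h + 1) < x h) by (apply x_decr; lia).
  split.
  - assert (E : Cmod (lam h - lam (h + 1))%C = r * (x h - x (h + 1)))
      by (rewrite lam_dist, Rabs_pos_eq; lra).
    exists (h + 1)%nat. repeat split; [lia | lia | | exact E].
    apply neq_of_Cmod_sub_pos. rewrite E. apply Rmult_lt_0_compat; lra.
  - intros j Hj Hne. destruct (Nat.lt_total j h) as [Hlt | [-> | Hgt]].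
    + eapply Rle_trans; [| apply dist_ge_gap_pred; lia].
      apply Rmult_le_compat_l; [lra | apply Hcmp; lia].
    + congruence.
    + apply dist_ge_gap_succ; lia.
Qed.

Lemma dist_ge_min_gap g i j : (forall k, (1 <= k < n)%nat -> g <= x k - x (k + 1)) ->
  (1 <= i <= n)%nat -> (1 <= j <= n)%nat -> i <> j ->
  r * g <= Cmod (lam i - lam j)%C.
Proof.
  intros Hg Hi Hj Hij.
  assert (Hlt : forall a b, (1 <= a)%nat -> (a < b <= n)%nat -> r * g <= Cmod (lam a - lam b)%C).
  { intros a b Ha Hb. eapply Rle_trans; [| apply dist_ge_gap_succ; lia].
    apply Rmult_le_compat_l; [lra | apply Hg; lia]. }
  destruct (proj1 (Nat.lt_gt_cases i j) Hij).
  - apply Hlt; lia.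
  - rewrite lam_dist, Rabs_minus_sym, <- lam_dist. apply Hlt; lia.
Qed.

End NearestNeighbour.

Lemma cos_pred_add_succ (theta : R) (h : nat) : (1 <= h)%nat ->
  cos (INR (h - 1) * theta) + cos (INR (h + 1) * theta) = 2 * cos (INR h * theta) * cos theta.
Proof.
  intros Hh. rewrite plus_INR, minus_INR by lia. simpl INR.
  replace ((INR h - 1) * theta) with (INR h * theta - theta) by ring.
  replace ((INR h + 1) * theta) with (INR h * theta + theta) by ring.
  rewrite cos_plus, cos_minus. ring.
Qed.

Lemma cos_gap_pred_le_succ (theta : R) (h : nat) : (1 <= h)%nat -> 0 <= cos (INR h * theta) ->
  cos (INR (h - 1) * theta) - cos (INR h * theta) <= cos (INR h * theta) - cos (INR (h + 1) * theta).
Proof.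
  intros Hh Hcos. pose proof (cos_pred_add_succ theta h Hh). pose proof (COS_bound theta). nra.
Qed.

Lemma cos_gap_succ_le_pred (theta : R) (h : nat) : (1 <= h)%nat -> cos (INR h * theta) <= 0 ->
  cos (INR h * theta) - cos (INR (h + 1) * theta) <= cos (INR (h - 1) * theta) - cos (INR h * theta).
Proof.
  intros Hh Hcos. pose proof (cos_pred_add_succ theta h Hh). pose proof (COS_bound theta). nra.
Qed.

Section CosineNodes.

Variable n : nat.
Local Notation N := (INR (n + 1)).
Local Notation theta := (PI / N).

Lemma INR_succ_pos : 0 < N.
Proof. apply lt_0_INR. lia. Qed.

Lemma theta_pos : 0 < theta.
Proof. apply Rdiv_lt_0_compat; [exact PI_RGT_0 | exact INR_succ_pos]. Qed.

Lemma INR_succ_mul_theta : N * theta = PI.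
Proof. pose proof INR_succ_pos. field. lra. Qed.

Lemma cos_node_decr i j : (i < j <= n + 1)%nat -> cos (INR j * theta) < cos (INR i * theta).
Proof.
  intros Hij. pose proof theta_pos. pose proof INR_succ_mul_theta. pose proof (pos_INR i).
  assert (INR i < INR j) by (apply lt_INR; lia).
  assert (INR j <= N) by (apply le_INR; lia).
  apply cos_decreasing_1; nra.
Qed.

Lemma cos_node_nonneg h : (2 * h <= n + 1)%nat -> 0 <= cos (INR h * theta).
Proof.
  intros Hh. pose proof theta_pos. pose proof INR_succ_mul_theta. pose proof (pos_INR h).
  assert (2 * INR h <= N) by (change 2 with (INR 2); rewrite <- mult_INR; apply le_INR; lia).
  apply cos_ge_0; nra.
Qed.

Lemma cos_node_nonpos h : (n + 1 <= 2 * h)%nat -> (h <= n + 1)%nat -> cos (INR h * theta) <= 0.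
Proof.
  intros Hh Hh'. pose proof theta_pos. pose proof INR_succ_mul_theta.
  assert (N <= 2 * INR h) by (change 2 with (INR 2); rewrite <- mult_INR; apply le_INR; lia).
  assert (INR h <= N) by (apply le_INR; lia).
  apply cos_le_0; nra.
Qed.

Lemma cos_node_gap k : cos (INR k * theta) - cos (INR (k + 1) * theta) =
  2 * sin (PI / (2 * N)) * sin ((2 * INR k + 1) * PI / (2 * N)).
Proof.
  pose proof INR_succ_pos. rewrite form2, (plus_INR k 1), INR_1.
  replace ((INR k * theta - (INR k + 1) * theta) / 2) with (- (PI / (2 * N))) by (field; lra).
  replace ((INR k * theta + (INR k + 1) * theta) / 2) with ((2 * INR k + 1) * PI / (2 * N))
    by (field; lra).
  rewrite sin_neg. ring.
Qed.

Lemma cos_node_gap_pred h : (1 <= h)%nat ->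
  cos (INR (h - 1) * theta) - cos (INR h * theta) =
  2 * sin (PI / (2 * N)) * sin ((2 * INR h - 1) * PI / (2 * N)).
Proof.
  intros Hh. pose proof (cos_node_gap (h - 1)) as E.
  rewrite Nat.sub_add in E by lia. rewrite E.
  replace (2 * INR (h - 1) + 1) with (2 * INR h - 1) by (rewrite minus_INR, INR_1 by lia; ring).
  reflexivity.
Qed.

Lemma sin_half_node_pos : 0 < sin (PI / (2 * N)).
Proof.
  pose proof theta_pos. pose proof INR_succ_mul_theta.
  assert (1 <= N) by (apply (le_INR 1); lia).
  replace (PI / (2 * N)) with (theta / 2) by (field; lra).
  apply sin_gt_0; nra.
Qed.

Lemma sin_node_ge_three k : (1 <= k < n)%nat ->
  sin (3 * PI / (2 * N)) <= sin ((2 * INR k + 1) * PI / (2 * N)).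
Proof.
  intros Hk. pose proof theta_pos. pose proof INR_succ_mul_theta. pose proof PI_RGT_0.
  assert (1 <= INR k) by (apply (le_INR 1); lia).
  assert (INR k + 1 + 1 <= N) by (rewrite <- !S_INR; apply le_INR; lia).
  replace (3 * PI / (2 * N)) with (3 * theta / 2) by (field; lra).
  replace ((2 * INR k + 1) * PI / (2 * N)) with ((2 * INR k + 1) * theta / 2) by (field; lra).
  destruct (Rle_dec ((2 * INR k + 1) * theta / 2) (PI / 2)).
  - apply sin_incr_1; nra.
  - rewrite <- (sin_PI_x ((2 * INR k + 1) * theta / 2)). apply sin_incr_1; nra.
Qed.

Lemma sin_node_last :
  sin ((2 * INR n - 1) * PI / (2 * N)) = sin (3 * PI / (2 * N)).
Proof.
  pose proof INR_succ_pos.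
  rewrite <- sin_PI_x. f_equal.
  rewrite plus_INR, INR_1 in *. field. lra.
Qed.

End CosineNodes.

Lemma Cmod_sqrt_square (s p : C) : (s * s)%C = p -> Cmod s = sqrt (Cmod p).
Proof. intros <-. rewrite Cmod_mult, sqrt_square; [reflexivity | apply Cmod_ge_0]. Qed.

Lemma Cmod_gt_0_of_square (s p : C) : (s * s)%C = p -> p <> RtoC 0 -> 0 < Cmod s.
Proof. intros <- Hp. apply Cmod_gt_0. intros ->. apply Hp. ring. Qed.

Lemma toep_eig_dist (delta s : C) (n i j : nat) :
  Cmod (toep_eig delta s n i - toep_eig delta s n j)%C =
  2 * Cmod s * Rabs (cos (INR i * (PI / INR (n + 1))) - cos (INR j * (PI / INR (n + 1)))).
Proof.
  unfold toep_eig, Rdiv. rewrite !Rmult_assoc.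
  set (a := cos (INR i * (PI * / INR (n + 1)))).
  set (b := cos (INR j * (PI * / INR (n + 1)))).
  replace (delta + 2 * s * RtoC a - (delta + 2 * s * RtoC b))%C with (RtoC 2 * s * RtoC (a - b))%C
    by (rewrite RtoC_minus; ring).
  rewrite !Cmod_mult, !Cmod_R, (Rabs_pos_eq 2); lra.
Qed.

Theorem proposition1 (n : nat) (sigma delta tau s : C) :
  (2 <= n)%nat ->
  (sigma * tau)%C <> RtoC 0 ->
  (s * s)%C = (sigma * tau)%C ->
  let lam := toep_eig delta s n in
  let c := 4 * sqrt (Cmod (sigma * tau)%C) * sin (PI / (2 * INR (n + 1))) in
  (forall h : nat, (1 <= h <= n)%nat ->
     (((1 < h)%nat /\ (2 * h <= n)%nat) \/ h = n ->
        is_min_dist lam n h (c * sin ((2 * INR h - 1) * PI / (2 * INR (n + 1))))) /\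
     (h = 1%nat \/ ((n < 2 * h)%nat /\ (h < n)%nat) ->
        is_min_dist lam n h (c * sin ((2 * INR h + 1) * PI / (2 * INR (n + 1)))))) /\
  (let d := c * sin (3 * PI / (2 * INR (n + 1))) in
   (forall i j : nat, (1 <= i <= n)%nat -> (1 <= j <= n)%nat -> lam i <> lam j ->
      d <= Cmod (lam i - lam j)%C) /\
   Cmod (lam 1%nat - lam 2%nat)%C = d /\
   Cmod (lam (n - 1)%nat - lam n)%C = d).
Proof.
  intros Hn Hst Hss lam c.
  set (x k := cos (INR k * (PI / INR (n + 1)))).
  pose proof (Cmod_gt_0_of_square s _ Hss Hst) as s_pos.
  assert (r_pos : 0 < 2 * Cmod s) by lra.
  assert (dist : forall i j, Cmod (lam i - lam j)%C = 2 * Cmod s * Rabs (x i - x j))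
    by (intros; apply toep_eig_dist).
  assert (decr : forall i j, (1 <= i)%nat -> (i < j <= n)%nat -> x j < x i)
    by (intros; apply cos_node_decr; lia).
  assert (value : forall b, c * sin b = 2 * Cmod s * (2 * sin (PI / (2 * INR (n + 1))) * sin b))
    by (intros; unfold c; rewrite <- (Cmod_sqrt_square s _ Hss); ring).
  assert (gap_pred_dist : forall h, (2 <= h <= n)%nat ->
    Cmod (lam (h - 1)%nat - lam h)%C = c * sin ((2 * INR h - 1) * PI / (2 * INR (n + 1)))).
  { intros h Hh. rewrite dist, Rabs_pos_eq by (apply Rlt_le, Rlt_0_minus, decr; lia).
    rewrite value, <- cos_node_gap_pred by lia. reflexivity. }
  split.
  - intros h Hh. split; intros Hcase; rewrite value.
    + rewrite <- cos_node_gap_pred by lia.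
      apply (is_min_dist_pred lam x _ n r_pos dist decr); [lia |].
      intros. apply cos_gap_pred_le_succ; [lia |]. apply cos_node_nonneg. lia.
    + rewrite <- cos_node_gap.
      apply (is_min_dist_succ lam x _ n r_pos dist decr); [lia |].
      intros. apply cos_gap_succ_le_pred; [lia |]. apply cos_node_nonpos; lia.
  - split; [| split].
    + intros i j Hi Hj Hne. rewrite value.
      apply (dist_ge_min_gap lam x _ n r_pos dist decr); [| lia | lia | congruence].
      intros k Hk. unfold x. rewrite cos_node_gap.
      apply Rmult_le_compat_l; [pose proof (sin_half_node_pos n); lra | apply sin_node_ge_three; lia].
    + etransitivity; [apply (gap_pred_dist 2%nat); lia |].
      replace (2 * INR 2 - 1) with 3 by (simpl; ring). reflexivity.
    + rewrite gap_pred_dist, sin_node_last by lia. reflexivity.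
Qed.
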